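(* Consider the algorithm described in the context. Suppose $f$ is bounded below by $f_{\mathrm{low}}$, twice continuously differentiable with $L_H$-Lipschitz continuous Hessian, and $\|\nabla^2 f(\mathbf{x}_k)\|\leq M$ for all $k$, for some $M>0$. Fix $\epsilon>0$ and an iteration $k$ such that $$\theta := (1-\alpha)^2 - \frac{4M(r-1)\alpha^2}{\epsilon(1-\alpha)^2} > 0,$$ $P_k$ is well-aligned and $\sigma_k\geq\epsilon$. If iteration $k$ is successful, then $$\hat\sigma^m_k\geq c_1\epsilon,\qquad c_1:=\frac{\min(1-\alpha,(1-\alpha)^2,\theta)}{1+\kappa_\sigma\mu^{-1}},\qquad \kappa_\sigma:=\max(\kappa_{\mathrm{eg}}\Delta_{\max},\kappa_{\mathrm{eh}}).$$
   Context: Algorithm: Let $f:\mathbb{R}^n\to\mathbb{R}$. Fix $\mathbf{x}_0$, $p\in\{1,\ldots,n\}$, $0<\Delta_0\leq\Delta_{\max}$, $0<\gamma_{\mathrm{dec}}<1<\gamma_{\mathrm{inc}}$, $\eta\in(0,1)$, $\mu>0$. For $k=0,1,\ldots$: select a random $P_k\in\mathbb{R}^{n\times p}$; build $\hat m_k(\hat{\mathbf{s}})=f(\mathbf{x}_k)+\hat{\mathbf{g}}_k^T\hat{\mathbf{s}}+\frac12\hat{\mathbf{s}}^T\hat H_k\hat{\mathbf{s}}$ ($\hat H_k$ symmetric) which is $P_k$-fully quadratic: constants $\kappa_{\mathrm{ef}},\kappa_{\mathrm{eg}},\kappa_{\mathrm{eh}}>0$ independent of $k$ with $|f(\mathbf{x}_k+P_k\hat{\mathbf{s}})-\hat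 m_k(\hat{\mathbf{s}})|\leq\kappa_{\mathrm{ef}}\Delta_k^3$, $\|P_k^T\nabla f(\mathbf{x}_k+P_k\hat{\mathbf{s}})-\nabla\hat m_k(\hat{\mathbf{s}})\|\leq\kappa_{\mathrm{eg}}\Delta_k^2$, $\|P_k^T\nabla^2 f(\mathbf{x}_k+P_k\hat{\mathbf{s}})P_k-\hat H_k\|\leq\kappa_{\mathrm{eh}}\Delta_k$ for all $\|\hat{\mathbf{s}}\|\leq\Delta_k$; compute a step $\hat{\mathbf{s}}_k$ with $\|\hat{\mathbf{s}}_k\|\leq\Delta_k$; let $R_k:=\frac{f(\mathbf{x}_k)-f(\mathbf{x}_k+P_k\hat{\mathbf{s}}_k)}{\hat m_k(\mathbf{0})-\hat m_k(\hat{\mathbf{s}}_k)}$, $\hat\tau^m_k:=\max(-\lambda_{\min}(\hat H_k),0)$, $\hat\sigma^m_k:=\max(\|\hat{\mathbf{g}}_k\|,\hat\tau^m_k)$; if $R_k\geq\eta$ and $\hat\sigma^m_k\geq\mu\Delta_k$ the iteration is successful: $\mathbf{x}_{k+1}=\mathbf{x}_k+P_k\hat{\mathbf{s}}_k$, $\Delta_{k+1}=\min(\gamma_{\mathrm{inc}}\Delta_k,\Delta_{\max})$; otherwise unsuccessful: $\mathbf{x}_{k+1}=\mathbf{x}_k$, $\Delta_{k+1}=\gamma_{\mathrm{dec}}\Delta_k$. Criticality: $\tau_k:=\max(-\lambda_{\min}(\nabla^2 f(\mathbf{x}_k)),0)$, $\sigma_k:=\max(\|\nabla f(\mathbf{x}_k)\|,\tau_k)$.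 Well-alignment: write $\nabla^2 f(\mathbf{x}_k)=\sum_{i=1}^r\lambda_i\mathbf{v}_i\mathbf{v}_i^T$, $\lambda_1\geq\cdots\geq\lambda_r$, $r=\operatorname{rank}(\nabla^2 f(\mathbf{x}_k))$, $\mathbf{v}_i$ orthonormal, $\hat{\mathbf{v}}_i:=P_k^T\mathbf{v}_i$; $P_k$ is well-aligned if $\|P_k\|\leq P_{\max}$, $\|P_k^T\nabla f(\mathbf{x}_k)\|\geq(1-\alpha)\|\nabla f(\mathbf{x}_k)\|$, $\|\hat{\mathbf{v}}_r\|\geq1-\alpha$, and $(\hat{\mathbf{v}}_i^T\hat{\mathbf{v}}_r)^2\leq4\alpha^2$ for $i=1,\ldots,r-1$, for fixed $\alpha\in(0,1)$, $P_{\max}>0$ independent of $k$. *)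

From mathcomp Require Import all_boot all_order all_algebra.
From mathcomp Require Import all_classical all_reals all_analysis.
Import GRing.Theory Num.Theory.
Import numFieldTopology.Exports numFieldNormedType.Exports.

Set Implicit Arguments.
Unset Strict Implicit.
Unset Printing Implicit Defensive.

Local Open Scope ring_scope.
Local Open Scope classical_set_scope.

Section Defs.
Variable R : realType.

Definition dot {m : nat} (u v : 'cV[R]_m) : R := (u^T *m v) 0 0.
Definition vnorm {m : nat} (u : 'cV[R]_m) : R := Num.sqrt (\sum_i u i 0 ^+ 2).

Definition opnorm {m k : nat} (A : 'M[R]_(m, k)) : R :=
  sup [set y | exists u : 'cV[R]_k, vnorm u <= 1 /\ y = vnorm (A *m u)].

Definition partial {n : nat} (i : 'I_n) (f : 'cV[R]_n -> R) (x : 'cV[R]_n) : R :=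
  'D_(delta_mx i 0) f x.
Definition grad {n : nat} (f : 'cV[R]_n -> R) (x : 'cV[R]_n) : 'cV[R]_n :=
  \col_i partial i f x.
Definition hess {n : nat} (f : 'cV[R]_n -> R) (x : 'cV[R]_n) : 'M[R]_n :=
  \matrix_(i, j) partial j (partial i f) x.

Definition C2 {n : nat} (f : 'cV[R]_n -> R) : Prop :=
  [/\ continuous f,
      (forall (i : 'I_n) x, derivable f x (delta_mx i 0 : 'cV[R]_n)),
      (forall i : 'I_n, continuous (partial i f)),
      (forall (i j : 'I_n) x, derivable (partial i f) x (delta_mx j 0 : 'cV[R]_n)) &
      (forall i j : 'I_n, continuous (partial j (partial i f)))].

Definition lambda_min {m : nat} (A : 'M[R]_m) : R := inf [set a | eigenvalue A a].

Definition tau_of {m : nat} (A : 'M[R]_m) : R := Num.max (- lambda_min A) 0.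
Definition sigma_of {m : nat} (g : 'cV[R]_m) (A : 'M[R]_m) : R :=
  Num.max (vnorm g) (tau_of A).

Definition model_val {p : nat} (f0 : R) (g : 'cV[R]_p) (H : 'M[R]_p) (s : 'cV[R]_p) : R :=
  f0 + dot g s + 2^-1 * dot s (H *m s).
Definition model_grad {p : nat} (g : 'cV[R]_p) (H : 'M[R]_p) (s : 'cV[R]_p) : 'cV[R]_p :=
  g + H *m s.

Definition fully_quadratic {n p : nat} (f : 'cV[R]_n -> R) (x : 'cV[R]_n)
    (P : 'M[R]_(n, p)) (D : R) (g : 'cV[R]_p) (H : 'M[R]_p) (kef keg keh : R) : Prop :=
  forall s : 'cV[R]_p, vnorm s <= D ->
    [/\ `|f (x + P *m s) - model_val (f x) g H s| <= kef * D ^+ 3,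
        vnorm (P^T *m grad f (x + P *m s) - model_grad g H s) <= keg * D ^+ 2 &
        opnorm (P^T *m hess f (x + P *m s) *m P - H) <= keh * D].

Definition ratio {n p : nat} (f : 'cV[R]_n -> R) (x : 'cV[R]_n) (P : 'M[R]_(n, p))
    (g : 'cV[R]_p) (H : 'M[R]_p) (s : 'cV[R]_p) : R :=
  (f x - f (x + P *m s)) / (model_val (f x) g H 0 - model_val (f x) g H s).

Definition successful {n p : nat} (eta mu : R) (f : 'cV[R]_n -> R) (x : 'cV[R]_n)
    (P : 'M[R]_(n, p)) (D : R) (g : 'cV[R]_p) (H : 'M[R]_p) (s : 'cV[R]_p) : Prop :=
  eta <= ratio f x P g H s /\ mu * D <= sigma_of g H.

(* H = sum_{i<r} lam_i v_i v_i^T with r = rank H, lam nonincreasing, v orthonormal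
   (indices shifted: paper's i = 1..r is 0..r-1 here) *)
Definition eig_decomp {n : nat} (H : 'M[R]_n) (r : nat) (lam : nat -> R)
    (v : nat -> 'cV[R]_n) : Prop :=
  [/\ r = \rank H,
      (forall i j : nat, (i <= j)%N -> (j < r)%N -> lam j <= lam i),
      (forall i j : nat, (i < r)%N -> (j < r)%N -> dot (v i) (v j) = (i == j)%:R) &
      H = \sum_(i < r) lam i *: (v i *m (v i)^T)].

Definition well_aligned {n p : nat} (alpha Pmax : R) (P : 'M[R]_(n, p))
    (gx : 'cV[R]_n) (r : nat) (v : nat -> 'cV[R]_n) : Prop :=
  [/\ opnorm P <= Pmax,
      (1 - alpha) * vnorm gx <= vnorm (P^T *m gx),
      ((0 < r)%N -> 1 - alpha <= vnorm (P^T *m v r.-1)) &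
      (forall i : nat, (i < r.-1)%N ->
         dot (P^T *m v i) (P^T *m v r.-1) ^+ 2 <= 4 * alpha ^+ 2)].

End Defs.

From mathcomp Require Import all_boot all_order all_algebra.
From mathcomp Require Import all_classical all_reals all_analysis.
Import GRing.Theory Num.Theory.
Import numFieldTopology.Exports numFieldNormedType.Exports.
From mathcomp Require Import ring lra.
Import Order.TTheory.
Local Open Scope ring_scope.
Local Open Scope classical_set_scope.

Set Implicit Arguments.
Unset Strict Implicit.
Unset Printing Implicit Defensive.

(* The fully quadratic model errors at the centre, [keg Delta^2] for the
   gradient and [keh Delta] for the Hessian, are both at most [kappa Delta],
   and success gives [Delta <= sigma^m / mu]; so it suffices to show
   [min(1 - alpha, theta) eps <= sigma^m + kappa Delta].  If [|grad f| >= eps],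
   gradient alignment gives [|g^m| >= (1 - alpha) eps - kappa Delta].
   Otherwise [lambda_min(hess f) <= -eps] forces the last eigenvalue
   [lambda_r <= -eps], and the Rayleigh quotient of the model Hessian at
   [w = P^T v_r] is dominated by [lambda_r |w|^2 <= -eps (1 - alpha)^2], the
   other eigen-directions contributing at most [4 M alpha^2] each by
   alignment.  As [lambda_min] is an infimum of eigenvalues, bounding it by a
   Rayleigh quotient needs that the infimum of the Rayleigh quotients of a
   symmetric matrix is itself an eigenvalue. *)

Section Euclidean.
Variable R : realType.

Lemma dotE m (u v : 'cV[R]_m) : dot u v = \sum_i u i 0 * v i 0.
Proof. by rewrite /dot mxE; apply: eq_bigr => i _; rewrite mxE. Qed.

Lemma dotC m (u v : 'cV[R]_m) : dot u v = dot v u.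
Proof. by rewrite !dotE; apply: eq_bigr => i _; rewrite mulrC. Qed.

Lemma dotDr m (u v w : 'cV[R]_m) : dot u (v + w) = dot u v + dot u w.
Proof. by rewrite !dotE -big_split; apply: eq_bigr => i _; rewrite mxE mulrDr. Qed.

Lemma dotBr m (u v w : 'cV[R]_m) : dot u (v - w) = dot u v - dot u w.
Proof. by rewrite !dotE -sumrB; apply: eq_bigr => i _; rewrite !mxE mulrBr. Qed.

Lemma dotZr m (u v : 'cV[R]_m) a : dot u (a *: v) = a * dot u v.
Proof. by rewrite !dotE mulr_sumr; apply: eq_bigr => i _; rewrite mxE mulrCA. Qed.

Lemma dotDl m (u v w : 'cV[R]_m) : dot (v + w) u = dot v u + dot w u.
Proof. by rewrite dotC dotDr !(dotC u). Qed.

Lemma dotBl m (u v w : 'cV[R]_m) : dot (v - w) u = dot v u - dot w u.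
Proof. by rewrite dotC dotBr !(dotC u). Qed.

Lemma dotZl m (u v : 'cV[R]_m) a : dot (a *: v) u = a * dot v u.
Proof. by rewrite dotC dotZr dotC. Qed.

Lemma dot0r m (u : 'cV[R]_m) : dot u 0 = 0.
Proof. by rewrite dotE big1 // => i _; rewrite mxE mulr0. Qed.

Lemma dot_mulmx m k (u : 'cV[R]_m) (A : 'M[R]_(m, k)) (v : 'cV[R]_k) :
  dot u (A *m v) = dot (A^T *m u) v.
Proof. by rewrite /dot trmx_mul trmxK mulmxA. Qed.

Lemma dot_sumr m I (s : seq I) (P : pred I) (u : 'cV[R]_m) (F : I -> 'cV[R]_m) :
  dot u (\sum_(i <- s | P i) F i) = \sum_(i <- s | P i) dot u (F i).
Proof. by rewrite /dot mulmx_sumr summxE. Qed.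

Lemma dot_outer m (y z v : 'cV[R]_m) : dot y ((v *m v^T) *m z) = dot y v * dot v z.
Proof. by rewrite -mulmxA [v^T *m z]mx11_scalar mul_mx_scalar dotZr mulrC. Qed.

Lemma dot_quadZ m (A : 'M[R]_m) (w : 'cV[R]_m) c :
  dot (c *: w) (A *m (c *: w)) = c ^+ 2 * dot w (A *m w).
Proof. by rewrite -scalemxAr dotZl dotZr mulrA expr2. Qed.

Lemma dot_self_ge0 m (u : 'cV[R]_m) : 0 <= dot u u.
Proof. by rewrite dotE sumr_ge0 // => i _; rewrite -expr2 sqr_ge0. Qed.

Lemma dot_self_eq0 m (u : 'cV[R]_m) : (dot u u == 0) = (u == 0).
Proof.
rewrite dotE psumr_eq0 => [|i _]; last by rewrite -expr2 sqr_ge0.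
apply/allP/eqP => [u0|-> i _]; last by rewrite /= mxE mulr0.
apply/matrixP => i j; rewrite (ord1 j) mxE; apply/eqP.
by rewrite -sqrf_eq0 expr2 (implyP (u0 i (mem_index_enum i))).
Qed.

Lemma dot_self_gt0 m (u : 'cV[R]_m) : (0 < dot u u) = (u != 0).
Proof. by rewrite lt_def dot_self_eq0 dot_self_ge0 andbT. Qed.

Lemma sqr_coord_le_dot m (u : 'cV[R]_m) i : u i 0 ^+ 2 <= dot u u.
Proof.
rewrite dotE (bigD1 i) //= -expr2 lerDl sumr_ge0 // => j _.
by rewrite -expr2 sqr_ge0.
Qed.

Lemma vnormE m (u : 'cV[R]_m) : vnorm u = Num.sqrt (dot u u).
Proof. by rewrite /vnorm dotE; congr Num.sqrt; apply: eq_bigr => i _; rewrite expr2. Qed.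

Lemma vnorm_sqr m (u : 'cV[R]_m) : vnorm u ^+ 2 = dot u u.
Proof. by rewrite vnormE sqr_sqrtr // dot_self_ge0. Qed.

Lemma vnorm_ge0 m (u : 'cV[R]_m) : 0 <= vnorm u.
Proof. by rewrite vnormE sqrtr_ge0. Qed.

Lemma vnorm_gt0 m (u : 'cV[R]_m) : (0 < vnorm u) = (u != 0).
Proof. by rewrite vnormE sqrtr_gt0 dot_self_gt0. Qed.

Lemma vnorm0 m : vnorm (0 : 'cV[R]_m) = 0.
Proof. by rewrite vnormE dot0r sqrtr0. Qed.

Lemma vnormZ m (u : 'cV[R]_m) a : vnorm (a *: u) = `|a| * vnorm u.
Proof.
by rewrite !vnormE dotZl dotZr mulrA -expr2 sqrtrM ?sqr_ge0 // sqrtr_sqr.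
Qed.

Definition mx_l1norm m k (C : 'M[R]_(m, k)) : R := \sum_i \sum_j `|C i j|.

Lemma mx_l1norm_ge0 m k (C : 'M[R]_(m, k)) : 0 <= mx_l1norm C.
Proof. by rewrite sumr_ge0 // => i _; rewrite sumr_ge0. Qed.

Lemma abs_quad_le m (C : 'M[R]_m) (u : 'cV[R]_m) :
  `|dot u (C *m u)| <= mx_l1norm C * dot u u.
Proof.
have -> : dot u (C *m u) = \sum_i \sum_j C i j * (u i 0 * u j 0).
  rewrite dotE; apply: eq_bigr => i _; rewrite mxE mulr_sumr.
  by apply: eq_bigr => j _; ring.
rewrite mulr_suml; apply: le_trans (ler_norm_sum _ _ _) _.
apply: ler_sum => i _; rewrite mulr_suml; apply: le_trans (ler_norm_sum _ _ _) _.
apply: ler_sum => j _; rewrite normrM ler_wpM2l // normrM.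
have := sqr_coord_le_dot u i; have := sqr_coord_le_dot u j.
rewrite -[u i 0 ^+ 2]real_normK ?num_real // -[u j 0 ^+ 2]real_normK ?num_real //.
have := sqr_ge0 (`|u i 0| - `|u j 0|); nra.
Qed.

Lemma nonneg_quadratic_discr (a b c : R) :
  0 <= c -> (forall t, 0 <= a + 2 * t * b + t ^+ 2 * c) -> b ^+ 2 <= a * c.
Proof.
move=> c_ge0 q_ge0; have [c0|c_neq0] := eqVneq c 0.
  rewrite c0 mulr0; have [->|b_neq0] := eqVneq b 0; first by rewrite expr0n.
  have := q_ge0 (- (a + 1) / (2 * b)); rewrite c0 mulr0 addr0.
  have -> : 2 * (- (a + 1) / (2 * b)) * b = - (a + 1) by field.
  lra.
have c_gt0 : 0 < c by rewrite lt_def c_neq0.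
have := q_ge0 (- b / c).
have -> : a + 2 * (- b / c) * b + (- b / c) ^+ 2 * c = a - b ^+ 2 / c.
  by field; rewrite gt_eqF.
by rewrite subr_ge0 ler_pdivrMr.
Qed.

Lemma psd_cauchy_schwarz m (B : 'M[R]_m) (z y : 'cV[R]_m) : B^T = B ->
  (forall w, 0 <= dot w (B *m w)) ->
  dot z (B *m y) ^+ 2 <= dot z (B *m z) * dot y (B *m y).
Proof.
move=> BT B_psd; apply: nonneg_quadratic_discr => // t.
have := B_psd (z + t *: y).
rewrite mulmxDr !dotDl !dotDr -!scalemxAr !dotZl !dotZr.
have -> : dot y (B *m z) = dot z (B *m y) by rewrite dot_mulmx BT dotC.
by move=> h; lra.
Qed.

Lemma cauchy_schwarz m (z y : 'cV[R]_m) : dot z y ^+ 2 <= dot z z * dot y y.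
Proof.
have := @psd_cauchy_schwarz m 1%:M z y (trmx1 _ _).
by rewrite !mul1mx; apply => w; rewrite mul1mx dot_self_ge0.
Qed.

Lemma abs_dot_le m (z y : 'cV[R]_m) : `|dot z y| <= vnorm z * vnorm y.
Proof.
have := cauchy_schwarz z y; rewrite -!vnorm_sqr -real_normK ?num_real //.
rewrite -exprMn => h; have := normr_ge0 (dot z y).
have := mulr_ge0 (vnorm_ge0 z) (vnorm_ge0 y); nra.
Qed.

Lemma vnormD_le m (u w : 'cV[R]_m) : vnorm (u + w) <= vnorm u + vnorm w.
Proof.
have := vnorm_sqr (u + w); rewrite !dotDl !dotDr (dotC w u) -!vnorm_sqr.
have := ler_norm (dot u w); have := abs_dot_le u w.
have := vnorm_ge0 u; have := vnorm_ge0 w; have := vnorm_ge0 (u + w); nra.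
Qed.

Lemma opnorm_has_ubound m k (A : 'M[R]_(m, k)) :
  has_ubound [set y | exists u : 'cV[R]_k, vnorm u <= 1 /\ y = vnorm (A *m u)].
Proof.
exists (1 + mx_l1norm (A^T *m A)) => _ [u [u_le1 ->]].
have Au_sqr : dot (A *m u) (A *m u) <= mx_l1norm (A^T *m A).
  rewrite dot_mulmx dotC mulmxA; apply: le_trans (ler_norm _) _.
  apply: le_trans (abs_quad_le _ _) _; rewrite -vnorm_sqr.
  have u_sqr_le1 : vnorm u ^+ 2 <= 1 by have := vnorm_ge0 u; nra.
  have := mx_l1norm_ge0 (A^T *m A); nra.
have := vnorm_sqr (A *m u); have := vnorm_ge0 (A *m u).
have := mx_l1norm_ge0 (A^T *m A); nra.
Qed.

Lemma opnorm_ge0 m k (A : 'M[R]_(m, k)) : 0 <= opnorm A.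
Proof.
apply: le_trans (vnorm_ge0 (A *m 0)) _; apply: (ub_le_sup (opnorm_has_ubound A)).
by exists 0; rewrite vnorm0 ler01.
Qed.

Lemma vnorm_mulmx_le m k (A : 'M[R]_(m, k)) u : vnorm (A *m u) <= opnorm A * vnorm u.
Proof.
have [->|u_neq0] := eqVneq u 0; first by rewrite mulmx0 !vnorm0 mulr0.
have u_gt0 : 0 < vnorm u by rewrite vnorm_gt0.
have unit_u : vnorm ((vnorm u)^-1 *: u) <= 1.
  by rewrite vnormZ ger0_norm ?invr_ge0 ?vnorm_ge0 // mulVf ?gt_eqF.
have := ub_le_sup (opnorm_has_ubound A) (ex_intro _ _ (conj unit_u erefl)).
rewrite -scalemxAr vnormZ ger0_norm ?invr_ge0 ?vnorm_ge0 //.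
by rewrite mulrC -ler_pdivrMr // mulrC.
Qed.

End Euclidean.

Section Spectrum.
Variable R : realType.

Lemma eigenvalue_rayleigh m (A : 'M[R]_m) a : eigenvalue A a ->
  exists2 c : 'cV[R]_m, c != 0 & a * dot c c = dot c (A *m c).
Proof.
move/eigenvalueP => [w wA w_neq0]; exists w^T; first by rewrite trmx_eq0.
have Ac : A^T *m w^T = a *: w^T by rewrite -trmx_mul wA linearZ.
by rewrite -dotZr -Ac dot_mulmx trmxK dotC.
Qed.

Lemma eigenvalue_has_lbound m (A : 'M[R]_m) : has_lbound [set a | eigenvalue A a].
Proof.
exists (- mx_l1norm A) => a /eigenvalue_rayleigh [c c_neq0 ac].
have c_gt0 : 0 < dot c c by rewrite dot_self_gt0.
have := abs_quad_le A c; rewrite -ac normrM (ger0_norm (ltW c_gt0)) ler_pM2r //.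
by have := ler_norm (- a); rewrite normrN; lra.
Qed.

Definition unit_rayleigh m (A : 'M[R]_m) : set R :=
  [set dot w (A *m w) | w in [set w : 'cV[R]_m | dot w w = 1]].

Lemma unit_rayleigh_quotient m (A : 'M[R]_m) (u : 'cV[R]_m) : u != 0 ->
  unit_rayleigh A (dot u (A *m u) / dot u u).
Proof.
move=> u_neq0; exists ((vnorm u)^-1 *: u) => /=.
  by rewrite dotZl dotZr mulrA -expr2 exprVn vnorm_sqr mulVf ?dot_self_eq0.
by rewrite dot_quadZ exprVn vnorm_sqr mulrC.
Qed.

Lemma unit_rayleigh_has_lbound m (A : 'M[R]_m) : has_lbound (unit_rayleigh A).
Proof.
exists (- mx_l1norm A) => _ [w /= w1 <-].
have := abs_quad_le A w; rewrite w1 mulr1.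
by have := ler_norm (- dot w (A *m w)); rewrite normrN; lra.
Qed.

Lemma unit_rayleigh_le m (A : 'M[R]_m) (u : 'cV[R]_m) : u != 0 ->
  inf (unit_rayleigh A) <= dot u (A *m u) / dot u u.
Proof.
by move=> u_neq0; apply: (ge_inf (unit_rayleigh_has_lbound A)); exact: unit_rayleigh_quotient.
Qed.

Lemma psd_unitmx_coercive m (B : 'M[R]_m) (z : 'cV[R]_m) : B^T = B ->
  (forall w, 0 <= dot w (B *m w)) -> B \in unitmx ->
  dot z z ^+ 2 <= dot z (B *m z) * (mx_l1norm (invmx B) * dot z z).
Proof.
move=> BT B_psd B_unit; set y := invmx B *m z.
have By : B *m y = z by rewrite mulmxA mulmxV // mul1mx.
have -> : dot z z = dot z (B *m y) by rewrite By.
apply: le_trans (psd_cauchy_schwarz z y BT B_psd) _.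
apply: ler_wpM2l; first exact: B_psd.
by rewrite By dotC; apply: le_trans (ler_norm _) (abs_quad_le _ _).
Qed.

(* [A - mu] is positive semidefinite for [mu] the infimum of the Rayleigh
   quotients; were it invertible, it would be coercive, which the Rayleigh
   quotients approaching [mu] forbid. *)
Lemma inf_unit_rayleigh_eigenvalue m (A : 'M[R]_m) : A^T = A ->
  unit_rayleigh A !=set0 -> eigenvalue A (inf (unit_rayleigh A)).
Proof.
move=> AT S_neq0; set mu := inf _; set B := A - mu%:M.
have BT : B^T = B by rewrite /B linearB /= AT tr_scalar_mx.
have Bq w : dot w (B *m w) = dot w (A *m w) - mu * dot w w.
  by rewrite mulmxBl dotBr mul_scalar_mx dotZr.
have B_psd w : 0 <= dot w (B *m w).
  rewrite Bq; have [->|w_neq0] := eqVneq w 0.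
    by rewrite mulmx0 !dot0r mulr0 subrr.
  have := unit_rayleigh_le A w_neq0; rewrite -/mu ler_pdivlMr ?dot_self_gt0 //.
  lra.
have /det0P [w w_neq0 wB] : \det B == 0.
  apply/negPn/negP => det_neq0.
  have B_unit : B \in unitmx by rewrite unitmxE unitfE.
  have K_ge0 := mx_l1norm_ge0 (invmx B); set K := mx_l1norm _ in K_ge0.
  have e_inv : (K + 1)^-1 * (K + 1) = 1 by rewrite mulVf // gt_eqF //; lra.
  have [_ [z /= z1 <-] z_lt] : exists2 q, unit_rayleigh A q & q < mu + (K + 1)^-1.
    by apply: inf_lt => //; rewrite ltrDl invr_gt0; lra.
  have := psd_unitmx_coercive z BT B_psd B_unit.
  have := B_psd z; rewrite Bq z1 mulr1 expr1n -/K; nra.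
apply/eigenvalueP; exists w => //.
by move/eqP: wB; rewrite mulmxBr mul_mx_scalar subr_eq0 => /eqP.
Qed.

Lemma lambda_min_le_rayleigh m (A : 'M[R]_m) (u : 'cV[R]_m) : A^T = A -> u != 0 ->
  lambda_min A <= dot u (A *m u) / dot u u.
Proof.
move=> AT u_neq0; apply: le_trans (unit_rayleigh_le A u_neq0).
apply: (ge_inf (eigenvalue_has_lbound A)); apply: inf_unit_rayleigh_eigenvalue => //.
by exists (dot u (A *m u) / dot u u); apply: unit_rayleigh_quotient.
Qed.

Lemma dot_sum_outer m r (c : nat -> R) (v : nat -> 'cV[R]_m) (y z : 'cV[R]_m) :
  dot y ((\sum_(i < r) c i *: (v i *m (v i)^T)) *m z) =
  \sum_(i < r) c i * (dot y (v i) * dot (v i) z).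
Proof.
rewrite mulmx_suml dot_sumr; apply: eq_bigr => i _.
by rewrite -scalemxAl dotZr dot_outer.
Qed.

Section Orthonormal.
Variables (m r : nat) (v : nat -> 'cV[R]_m).
Hypothesis v_orthonormal :
  forall i j : nat, (i < r)%N -> (j < r)%N -> dot (v i) (v j) = (i == j)%:R.

Lemma sum_dot_orthonormal (F : 'I_r -> R) (i : 'I_r) :
  \sum_(j < r) F j * dot (v i) (v j) = F i.
Proof.
rewrite (bigD1 i) //= v_orthonormal // eqxx mulr1 big1 ?addr0 // => j ji.
have /negbTE ij : (i != j :> nat) by rewrite eq_sym.
by rewrite v_orthonormal // ij mulr0.
Qed.

Lemma bessel_inequality (c : 'cV[R]_m) : \sum_(i < r) dot (v i) c ^+ 2 <= dot c c.
Proof.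
set w := \sum_(i < r) dot (v i) c *: v i.
have cw : dot c w = \sum_(i < r) dot (v i) c ^+ 2.
  by rewrite dot_sumr; apply: eq_bigr => i _; rewrite dotZr dotC expr2.
have vw (i : 'I_r) : dot (v i) w = dot (v i) c.
  rewrite dot_sumr -[RHS](sum_dot_orthonormal (fun j => dot (v j) c)).
  by apply: eq_bigr => j _; rewrite dotZr.
have ww : dot w w = \sum_(i < r) dot (v i) c ^+ 2.
  rewrite {1}/w dotC dot_sumr; apply: eq_bigr => i _.
  by rewrite dotZr (dotC w) vw expr2.
by have := dot_self_ge0 (c - w); rewrite dotBl !dotBr (dotC w c) cw ww; lra.
Qed.

Variables (lam : nat -> R) (A : 'M[R]_m).
Hypothesis A_decomp : A = \sum_(i < r) lam i *: (v i *m (v i)^T).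

(* [L <= 0] is needed both for the directions orthogonal to the [v i] and for
   the junk value [inf set0 = 0] when [A] has no eigenvalue. *)
Lemma lambda_min_ge_lb (L : R) : L <= 0 -> (forall i, (i < r)%N -> L <= lam i) ->
  L <= lambda_min A.
Proof.
move=> L_le0 L_le_lam.
have [[a0 a0_eig]|no_eig] := pselect (exists a, eigenvalue A a); last first.
  rewrite /lambda_min (_ : [set a | eigenvalue A a] = set0) ?inf0 //.
  by apply/seteqP; split => a // a_eig; apply: no_eig; exists a.
apply: lb_le_inf; first by exists a0.
move=> a /eigenvalue_rayleigh [c c_neq0 ac].
have c_gt0 : 0 < dot c c by rewrite dot_self_gt0.
rewrite -(ler_pM2r c_gt0) ac A_decomp dot_sum_outer.
apply: le_trans (_ : L * \sum_(i < r) dot (v i) c ^+ 2 <= _).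
  by rewrite ler_wnM2l // bessel_inequality.
rewrite mulr_sumr; apply: ler_sum => i _.
by rewrite (dotC c) -expr2 ler_wpM2r ?sqr_ge0 ?L_le_lam.
Qed.

Lemma coef_le_opnorm i : (i < r)%N -> lam i <= opnorm A.
Proof.
move=> ir; have v_unit : vnorm (v i) = 1 by rewrite vnormE v_orthonormal // eqxx sqrtr1.
have <- : dot (v i) (A *m v i) = lam i.
  rewrite A_decomp dot_sum_outer.
  have := sum_dot_orthonormal (fun j => lam j * dot (v j) (v i)) (Ordinal ir).
  rewrite /= v_orthonormal // eqxx mulr1 => <-.
  by apply: eq_bigr => j _; rewrite mulrAC mulrA.
apply: le_trans (ler_norm _) _; apply: le_trans (abs_dot_le _ _) _.
by rewrite v_unit mul1r -[X in _ <= X]mulr1 -[X in _ <= _ * X]v_unit vnorm_mulmx_le.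
Qed.

End Orthonormal.

Lemma eig_decomp_last_coef_le m (A : 'M[R]_m) r (lam : nat -> R) (v : nat -> 'cV[R]_m)
    (eps : R) :
  eig_decomp A r lam v -> 0 < eps -> lambda_min A <= - eps ->
  (0 < r)%N /\ lam r.-1 <= - eps.
Proof.
move=> [_ lam_mono v_on A_decomp] eps_gt0 lmin_le; have [r0|r_gt0] := posnP r.
  have no_coef i : (i < r)%N -> 0 <= lam i by rewrite r0.
  by have := lambda_min_ge_lb v_on A_decomp (lexx 0) no_coef; lra.
split => //; have L_le0 : Num.min 0 (lam r.-1) <= 0 by rewrite ge_min lexx.
have L_le_lam i : (i < r)%N -> Num.min 0 (lam r.-1) <= lam i.
  by move=> ir; rewrite ge_min lam_mono ?orbT // -ltnS prednK.
have := le_trans (lambda_min_ge_lb v_on A_decomp L_le0 L_le_lam) lmin_le.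
by rewrite ge_min => /orP[|//]; lra.
Qed.

End Spectrum.

Section TrustRegion.
Variable R : realType.

Lemma radius_bounded (Dmax gdec ginc : R) (Delta : nat -> R) :
  0 < Delta 0 -> Delta 0 <= Dmax -> 0 < gdec -> gdec < 1 -> 1 < ginc ->
  (forall j, Delta j.+1 = Num.min (ginc * Delta j) Dmax \/ Delta j.+1 = gdec * Delta j) ->
  forall j, 0 < Delta j /\ Delta j <= Dmax.
Proof.
move=> D0_gt0 D0_le gdec_gt0 gdec_lt1 ginc_gt1 D_step; elim=> [//|j [Dj_gt0 Dj_le]].
have [->|->] := D_step j; split.
- by rewrite lt_min (lt_le_trans Dj_gt0 Dj_le) andbT; apply: mulr_gt0 => //; lra.
- by rewrite ge_min lexx orbT.
- exact: mulr_gt0.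
- nra.
Qed.

Lemma fully_quadratic_center n p (f : 'cV[R]_n -> R) (x : 'cV[R]_n) (P : 'M[R]_(n, p))
    (g : 'cV[R]_p) (H : 'M[R]_p) (D kef keg keh Dmax : R) :
  0 < D -> D <= Dmax -> 0 <= keg -> fully_quadratic f x P D g H kef keg keh ->
  vnorm (P^T *m grad f x - g) <= Num.max (keg * Dmax) keh * D /\
  opnorm (P^T *m hess f x *m P - H) <= Num.max (keg * Dmax) keh * D.
Proof.
move=> D_gt0 D_le keg_ge0 fq; have [|_] := fq 0; first by rewrite vnorm0 ltW.
rewrite /model_grad !mulmx0 !addr0 => grad_err hess_err; split.
- apply: le_trans grad_err _; rewrite expr2 mulrA ler_pM2r // le_max.
  by rewrite ler_wpM2l.
- by apply: le_trans hess_err _; rewrite ler_pM2r // le_max lexx orbT.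
Qed.

Lemma quad_le_perturb m (A B : 'M[R]_m) (w : 'cV[R]_m) :
  dot w (B *m w) <= dot w (A *m w) + opnorm (A - B) * dot w w.
Proof.
have : `|dot w ((A - B) *m w)| <= opnorm (A - B) * dot w w.
  apply: le_trans (abs_dot_le _ _) _; rewrite -vnorm_sqr expr2 mulrCA.
  by apply: ler_wpM2l; [exact: vnorm_ge0 | exact: vnorm_mulmx_le].
by rewrite mulmxBl dotBr ler_norml => /andP[]; lra.
Qed.

Lemma projected_last_quad_le n p r (lam : nat -> R) (v : nat -> 'cV[R]_n)
    (A : 'M[R]_n) (P : 'M[R]_(n, p)) (M delta : R) :
  A = \sum_(i < r) lam i *: (v i *m (v i)^T) -> (0 < r)%N -> 0 <= M ->
  (forall i, (i < r.-1)%N -> lam i <= M) ->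
  (forall i, (i < r.-1)%N -> dot (P^T *m v i) (P^T *m v r.-1) ^+ 2 <= delta) ->
  dot (P^T *m v r.-1) (P^T *m A *m P *m (P^T *m v r.-1))
    <= r.-1%:R * (M * delta) + lam r.-1 * dot (P^T *m v r.-1) (P^T *m v r.-1) ^+ 2.
Proof.
case: r => [//|r] A_decomp _ M_ge0 lam_le delta_ge /=.
set w := P^T *m v r.
have -> : dot w (P^T *m A *m P *m w) = \sum_(i < r.+1) lam i * dot (P^T *m v i) w ^+ 2.
  rewrite -!mulmxA dot_mulmx trmxK A_decomp dot_sum_outer.
  by apply: eq_bigr => i _; rewrite (dotC (P *m w)) dot_mulmx expr2.
rewrite big_ord_recr /=; apply: lerD => //.
apply: le_trans (_ : \sum_(i < r) M * delta <= _); last first.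
  by rewrite sumr_const card_ord mulr_natl.
apply: ler_sum => i _; have := delta_ge i (ltn_ord i); have := lam_le i (ltn_ord i).
by have := sqr_ge0 (dot (P^T *m v i) w); nra.
Qed.

Lemma neg_curvature_model_lb n p r (lam : nat -> R) (v : nat -> 'cV[R]_n)
    (A : 'M[R]_n) (P : 'M[R]_(n, p)) (Hm : 'M[R]_p) (M alpha eps e : R) :
  Hm^T = Hm -> alpha < 1 -> 0 < eps -> eig_decomp A r lam v -> opnorm A <= M ->
  lambda_min A <= - eps ->
  ((0 < r)%N -> 1 - alpha <= vnorm (P^T *m v r.-1)) ->
  (forall i, (i < r.-1)%N -> dot (P^T *m v i) (P^T *m v r.-1) ^+ 2 <= 4 * alpha ^+ 2) ->
  opnorm (P^T *m A *m P - Hm) <= e ->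
  eps * ((1 - alpha) ^+ 2 - 4 * M * (r%:R - 1) * alpha ^+ 2 / (eps * (1 - alpha) ^+ 2))
    - e <= - lambda_min Hm.
Proof.
move=> Hm_sym alpha_lt1 eps_gt0 decomp A_le_M lmin_le w_large w_align Hm_err.
have [_ _ v_on A_decomp] := decomp.
have [r_gt0 lam_last] := eig_decomp_last_coef_le decomp eps_gt0 lmin_le.
have M_ge0 : 0 <= M := le_trans (opnorm_ge0 A) A_le_M.
have lam_le i : (i < r.-1)%N -> lam i <= M.
  move=> ir; apply: le_trans A_le_M; apply: (coef_le_opnorm v_on A_decomp).
  exact: leq_trans ir (leq_pred r).
have quad := projected_last_quad_le A_decomp r_gt0 M_ge0 lam_le w_align.
set w := P^T *m v r.-1 in w_large quad; set N := dot w w in quad.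
have a_gt0 : 0 < 1 - alpha by lra.
have N_ge : (1 - alpha) ^+ 2 <= N by rewrite /N -vnorm_sqr; have := w_large r_gt0; nra.
have N_gt0 : 0 < N by apply: lt_le_trans N_ge; rewrite exprn_gt0.
have w_neq0 : w != 0 by rewrite -dot_self_gt0.
have := lambda_min_le_rayleigh Hm_sym w_neq0; rewrite ler_pdivlMr // -/N => ray.
have pert := quad_le_perturb (P^T *m A *m P) Hm w; rewrite -/N in pert.
have err : opnorm (P^T *m A *m P - Hm) * N <= e * N := ler_wpM2r (ltW N_gt0) Hm_err.
set Q := r.-1%:R * (M * (4 * alpha ^+ 2)) in quad.
set q := Q / (1 - alpha) ^+ 2.
have QN : Q <= q * N.
  rewrite /q mulrAC ler_pdivlMr ?exprn_gt0 // ler_wpM2l // /Q.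
  by apply: mulr_ge0; [exact: ler0n | apply: mulr_ge0 => //; nra].
have lmin_le_q : lambda_min Hm <= q + lam r.-1 * N + e.
  by rewrite -(ler_pM2r N_gt0); lra.
have -> : eps * ((1 - alpha) ^+ 2 - 4 * M * (r%:R - 1) * alpha ^+ 2 /
  (eps * (1 - alpha) ^+ 2)) = eps * (1 - alpha) ^+ 2 - q.
  have -> : r%:R - 1 = r.-1%:R :> R by rewrite -[in LHS](prednK r_gt0) -natr1 addrK.
  rewrite /q /Q; field.
  by rewrite !gt_eqF.
have := ler_wpM2r (ltW N_gt0) lam_last.
have := ler_wpM2l (ltW eps_gt0) N_ge.
lra.
Qed.

Lemma model_grad_lb n p (P : 'M[R]_(n, p)) (gx : 'cV[R]_n) (g : 'cV[R]_p)
    (alpha eps e : R) :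
  alpha < 1 -> eps <= vnorm gx -> (1 - alpha) * vnorm gx <= vnorm (P^T *m gx) ->
  vnorm (P^T *m gx - g) <= e -> (1 - alpha) * eps - e <= vnorm g.
Proof.
move=> alpha_lt1 eps_le align err.
have := vnormD_le g (P^T *m gx - g); rewrite addrC subrK.
have : (1 - alpha) * eps <= (1 - alpha) * vnorm gx by rewrite ler_wpM2l //; lra.
lra.
Qed.

Lemma vnorm_le_sigma_of m (g : 'cV[R]_m) (A : 'M[R]_m) : vnorm g <= sigma_of g A.
Proof. by rewrite /sigma_of le_max lexx. Qed.

Lemma opp_lambda_min_le_sigma_of m (g : 'cV[R]_m) (A : 'M[R]_m) :
  - lambda_min A <= sigma_of g A.
Proof. by rewrite /sigma_of /tau_of !le_max lexx !orbT. Qed.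

Lemma sigma_of_ge m (g : 'cV[R]_m) (A : 'M[R]_m) (eps : R) :
  0 < eps -> eps <= sigma_of g A -> eps <= vnorm g \/ lambda_min A <= - eps.
Proof.
move=> eps_gt0; rewrite /sigma_of /tau_of !le_max => /orP[|/orP[]] eps_le.
- by left.
- by right; lra.
- by exfalso; lra.
Qed.

Lemma success_sigma_lb (mu kappa D sigma c eps : R) :
  0 < mu -> 0 <= kappa -> mu * D <= sigma -> c * eps <= sigma + kappa * D ->
  c / (1 + kappa / mu) * eps <= sigma.
Proof.
move=> mu_gt0 kappa_ge0 muD_le c_le.
have den_gt0 : 0 < 1 + kappa / mu by have := divr_ge0 kappa_ge0 (ltW mu_gt0); lra.
rewrite mulrAC ler_pdivrMr //.
have D_le : D <= sigma / mu by rewrite ler_pdivlMr // mulrC.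
have -> : sigma * (1 + kappa / mu) = sigma + kappa * (sigma / mu) by ring.
by apply: le_trans c_le _; rewrite lerD2l ler_wpM2l.
Qed.

End TrustRegion.

Unset Implicit Arguments.

Theorem lemma3p9 (R : realType) (n p : nat)
  (f : 'cV[R]_n -> R) (flow LH M : R)
  (* algorithm parameters *)
  (Delta_max gamma_dec gamma_inc eta mu kef keg keh : R)
  (* iterates of the algorithm *)
  (x : nat -> 'cV[R]_n) (Delta : nat -> R) (P : nat -> 'M[R]_(n, p))
  (g : nat -> 'cV[R]_p) (H : nat -> 'M[R]_p) (s : nat -> 'cV[R]_p)
  (* well-alignment parameters, tolerance, iteration, spectral decomposition *)
  (alpha Pmax eps : R) (k : nat) (r : nat) (lam : nat -> R) (v : nat -> 'cV[R]_n) :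
  (* algorithm setup *)
  (1 <= p <= n)%N ->
  0 < Delta 0 -> Delta 0 <= Delta_max ->
  0 < gamma_dec -> gamma_dec < 1 -> 1 < gamma_inc ->
  0 < eta -> eta < 1 -> 0 < mu ->
  0 < kef -> 0 < keg -> 0 < keh ->
  (forall j, (H j)^T = H j) ->
  (forall j, fully_quadratic f (x j) (P j) (Delta j) (g j) (H j) kef keg keh) ->
  (forall j, vnorm (s j) <= Delta j) ->
  (forall j, successful eta mu f (x j) (P j) (Delta j) (g j) (H j) (s j) ->
     x j.+1 = x j + P j *m s j /\ Delta j.+1 = Num.min (gamma_inc * Delta j) Delta_max) ->
  (forall j, ~ successful eta mu f (x j) (P j) (Delta j) (g j) (H j) (s j) ->
     x j.+1 = x j /\ Delta j.+1 = gamma_dec * Delta j) ->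
  (* assumptions on f *)
  (forall y, flow <= f y) ->
  C2 f ->
  (forall y z, opnorm (hess f y - hess f z) <= LH * vnorm (y - z)) ->
  0 < M -> (forall j, opnorm (hess f (x j)) <= M) ->
  (* the fixed iteration k *)
  0 < alpha -> alpha < 1 -> 0 < Pmax ->
  0 < eps ->
  eig_decomp (hess f (x k)) r lam v ->
  0 < (1 - alpha) ^+ 2
        - 4 * M * (r%:R - 1) * alpha ^+ 2 / (eps * (1 - alpha) ^+ 2) ->
  well_aligned alpha Pmax (P k) (grad f (x k)) r v ->
  eps <= sigma_of (grad f (x k)) (hess f (x k)) ->
  successful eta mu f (x k) (P k) (Delta k) (g k) (H k) (s k) ->
  let theta := (1 - alpha) ^+ 2
        - 4 * M * (r%:R - 1) * alpha ^+ 2 / (eps * (1 - alpha) ^+ 2) in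
  let kappa_sigma := Num.max (keg * Delta_max) keh in
  let c1 := Num.min (1 - alpha) (Num.min ((1 - alpha) ^+ 2) theta)
              / (1 + kappa_sigma / mu) in
  c1 * eps <= sigma_of (g k) (H k).
Proof.
move=> _ D0_gt0 D0_le gdec_gt0 gdec_lt1 ginc_gt1 _ _ mu_gt0 _ keg_gt0 keh_gt0 H_sym fq _
  succ_step fail_step _ _ _ _ hess_le _ alpha_lt1 _ eps_gt0 decomp _ aligned sigma_ge succ.
cbv zeta; set c0 := Num.min (1 - alpha) _.
have D_step j : Delta j.+1 = Num.min (gamma_inc * Delta j) Delta_max \/
                Delta j.+1 = gamma_dec * Delta j.
  by have [/succ_step[_ ->]|/fail_step[_ ->]] :=
    pselect (successful eta mu f (x j) (P j) (Delta j) (g j) (H j) (s j)); [left|right].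
have [Dk_gt0 Dk_le] := radius_bounded D0_gt0 D0_le gdec_gt0 gdec_lt1 ginc_gt1 D_step k.
have [grad_err hess_err] := fully_quadratic_center Dk_gt0 Dk_le (ltW keg_gt0) (fq k).
apply: (success_sigma_lb mu_gt0 _ succ.2); first by rewrite le_max (ltW keh_gt0) orbT.
have [_ align_grad align_last align_rest] := aligned.
have [grad_large|curv_neg] := sigma_of_ge eps_gt0 sigma_ge.
- have := model_grad_lb alpha_lt1 grad_large align_grad grad_err.
  have := vnorm_le_sigma_of (g k) (H k).
  have : c0 <= 1 - alpha by rewrite ge_min lexx.
  by move=> /(ler_wpM2r (ltW eps_gt0)); lra.
- have := neg_curvature_model_lb (H_sym k) alpha_lt1 eps_gt0 decomp (hess_le k) curv_neg
    align_last align_rest hess_err.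
  have := opp_lambda_min_le_sigma_of (g k) (H k).
  have : c0 <= (1 - alpha) ^+ 2
      - 4 * M * (r%:R - 1) * alpha ^+ 2 / (eps * (1 - alpha) ^+ 2).
    by rewrite !ge_min lexx !orbT.
  by move=> /(ler_wpM2r (ltW eps_gt0)); lra.
Qed.
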